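(* For a model class $\mathcal M$ and $\bar M\in\mathcal M^+$ define $$\widetilde{\mathrm{dec}}_\varepsilon(\mathcal M,\bar M)=\inf_{p,q\in\Delta(\Pi)}\sup_{M\in\mathcal H_{p,\varepsilon}(\bar M)\cap\mathcal H_{q,\varepsilon}(\bar M)}\mathbb E_{\pi\sim p}[g^M(\pi)],$$ with value $0$ when $\mathcal H_{p,\varepsilon}(\bar M)\cap\mathcal H_{q,\varepsilon}(\bar M)=\emptyset$. Then for all $\bar M\in\mathcal M^+$ and $\varepsilon>0$, $$\widetilde{\mathrm{dec}}_\varepsilon(\mathcal M,\bar M)\le\mathrm{dec}^{\mathrm c}_{\mathrm{pac},\varepsilon}(\mathcal M,\bar M)\le\widetilde{\mathrm{dec}}_{\sqrt2\varepsilon}(\mathcal M,\bar M).$$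
   Context: Models are kernels $M:\Pi\to\Delta([0,1]\times\mathcal O)$ (rewards in $[0,1]$); $\mathcal M^+$ is the set of all models. $f^M(\pi)=\mathbb E_{(r,o)\sim M(\pi)}[r]$, $\pi_M\in\arg\max f^M$, $g^M(\pi)=f^M(\pi_M)-f^M(\pi)$; $D^2_H$ is squared Hellinger distance. $\mathcal H_{p,\varepsilon}(\bar M)=\{M\in\mathcal M:\mathbb E_{\pi\sim p}[D^2_H(M(\pi),\bar M(\pi))]\le\varepsilon^2\}$. Constrained PAC DEC: $\mathrm{dec}^{\mathrm c}_{\mathrm{pac},\varepsilon}(\mathcal M,\bar M)=\inf_{p,q\in\Delta(\Pi)}\sup_{M\in\mathcal H_{q,\varepsilon}(\bar M)}\mathbb E_{\pi\sim p}[g^M(\pi)]$ (value $0$ if the set is empty). *)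

From HB Require Import structures.
From mathcomp Require Import all_boot all_order all_algebra.
From mathcomp Require Import all_classical all_reals all_analysis.
Set Implicit Arguments. Unset Strict Implicit. Unset Printing Implicit Defensive.
Import Order.TTheory GRing.Theory Num.Theory.
Import numFieldNormedType.Exports.
Local Open Scope classical_set_scope.
Local Open Scope ring_scope.
Local Open Scope ereal_scope.

Section DEC.
Context {R : realType} {d d' : measure_display}
  (Pi : measurableType d) (O : measurableType d').

(* Outcome space: (reward, observation) in R * O; models are probability
   kernels Pi ~> R * O whose reward lies in [0,1] almost surely. *)
Definition kern := R.-pker Pi ~> (R * O)%type.

Definition is_model (M : kern) : Prop :=
  forall x : Pi, M x ([set r : R | (0 <= r <= 1)%R] `*` [set: O]) = 1.

(* Squared Hellinger distance (general measure-theoretic form, Le Cam):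
   supremum over finite measurable partitions (A_i) of T of
   sum_i (sqrt P(A_i) - sqrt Q(A_i))^2 .  No 1/2 normalisation. *)
Definition is_fin_partition {dT} {T : measurableType dT} (s : seq (set T)) :=
  [/\ forall A, A \in s -> measurable A,
      forall i j, (i < size s)%N -> (j < size s)%N -> i <> j ->
         nth set0 s i `&` nth set0 s j = set0
    & \big[setU/set0]_(A <- s) A = [set: T]].

Definition D2H {dT} {T : measurableType dT}
    (P Q : {measure set T -> \bar R}) : \bar R :=
  ereal_sup [set (\sum_(A <- s)
      (Num.sqrt (fine (P A)) - Num.sqrt (fine (Q A))) ^+ 2)%:E
    | s in @is_fin_partition dT T].

Definition fM (M : kern) (x : Pi) : \bar R := \int[M x]_z (z.1)%:E.

(* g^M(pi) = f^M(pi_M) - f^M(pi), with f^M(pi_M) = max f^M = sup f^M *)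
Definition gM (M : kern) (x : Pi) : \bar R := ereal_sup (range (fM M)) - fM M x.

Definition Hball (Mcls : set kern) (Mbar : kern) (p : probability Pi R)
    (eps : R) : set kern :=
  [set M | Mcls M /\ \int[p]_x D2H (M x) (Mbar x) <= (eps ^+ 2)%:E].

Definition sup0 (H : set kern) (F : kern -> \bar R) : \bar R :=
  if pselect (H = set0) then 0 else ereal_sup (F @` H).

Definition dec_c (Mcls : set kern) (Mbar : kern) (eps : R) : \bar R :=
  ereal_inf [set v | exists p q : probability Pi R,
    v = sup0 (Hball Mcls Mbar q eps) (fun M => \int[p]_x gM M x)].

Definition dec_tilde (Mcls : set kern) (Mbar : kern) (eps : R) : \bar R :=
  ereal_inf [set v | exists p q : probability Pi R,
    v = sup0 (Hball Mcls Mbar p eps `&` Hball Mcls Mbar q eps)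
             (fun M => \int[p]_x gM M x)].

End DEC.

From Pilot Require Import Defs.
From HB Require Import structures.
From mathcomp Require Import all_boot all_order all_algebra.
From mathcomp Require Import all_classical all_reals all_analysis.
From mathcomp Require Import measurable_realfun.
Import Order.TTheory GRing.Theory Num.Theory.
Local Open Scope classical_set_scope.
Local Open Scope ring_scope.

(* The left inequality holds pairwise: for the same (p, q), the ball
   H_p /\ H_q is contained in H_q, and since g^M >= 0 a supremum over a
   smaller set is smaller.  For the right one, given (p, q) play (p, m) with
   m = (p + q)/2 in the constrained DEC: p <= 2 m and q <= 2 m setwise, so
   E_p D <= 2 E_m D and E_q D <= 2 E_m D, i.e.
   H_{m,eps} is contained in H_{p,sqrt 2 eps} /\ H_{q,sqrt 2 eps}. *)

Section scaled_measure_domination.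
Local Open Scope ereal_scope.
Context {d} {T : measurableType d} {R : realType}.
Variables (m1 m2 : {measure set T -> \bar R}) (c : R).
Hypotheses (c0 : (0 <= c)%R) (m12 : forall A, measurable A -> m1 A <= c%:E * m2 A).

Import HBNNSimple.

Lemma le_scale_measure_sintegral (h : {nnsfun T >-> R}) :
  sintegral m1 h <= c%:E * sintegral m2 h.
Proof.
rewrite !sintegralE ge0_mule_fsumr; last by move=> r; exact: nnsfun_mulemu_ge0.
apply: lee_fsum => // _ [t _ <-].
by rewrite muleCA lee_wpmul2l ?lee_fin ?m12.
Qed.

(* Unlike [ge0_le_measure_integral], [f] need not be measurable: the integrands
   [x |-> D2H (M x) (Mbar x)] below are not known to be. *)
Lemma le_scale_measure_integral (f : T -> \bar R) : (forall x, 0 <= f x) ->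
  \int[m1]_x f x <= c%:E * \int[m2]_x f x.
Proof.
move=> f0; rewrite !ge0_integralE// ge_ereal_sup// => _ [h hf <-].
apply: le_trans (le_scale_measure_sintegral h) _.
by rewrite lee_wpmul2l ?lee_fin//; apply: ereal_sup_ubound; exists h.
Qed.

End scaled_measure_domination.

Section half_mixture.
Local Open Scope ereal_scope.
Context {d} {T : measurableType d} {R : realType}.
Variables p q : probability T R.

Definition half_mix (A : set T) : \bar R := (2^-1)%:E * (p A + q A).

Let half_ge0 : (0 <= 2^-1 :> R)%R. Proof. by rewrite invr_ge0. Qed.

Let half_mix_mscale : half_mix = mscale (NngNum half_ge0) (measure_add p q).
Proof.
by apply/funext => A; rewrite /half_mix /mscale /= /msum !big_ord_recl big_ord0 adde0.
Qed.

Let half_mix0 : half_mix set0 = 0.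
Proof. by rewrite half_mix_mscale measure0. Qed.

Let half_mix_ge0 A : 0 <= half_mix A.
Proof. by rewrite half_mix_mscale. Qed.

Let half_mix_sigma_additive : semi_sigma_additive half_mix.
Proof. by rewrite half_mix_mscale; exact: measure_semi_sigma_additive. Qed.

HB.instance Definition _ := isMeasure.Build _ _ _ half_mix
  half_mix0 half_mix_ge0 half_mix_sigma_additive.

Let half_mix_setT : half_mix [set: T] = 1.
Proof. by rewrite /half_mix !probability_setT -EFinD -EFinM mulVf. Qed.

HB.instance Definition _ := @Measure_isProbability.Build _ _ R half_mix half_mix_setT.

Lemma half_mix_dominatesl A : p A <= 2%:E * half_mix A.
Proof. by rewrite muleA -EFinM mulfV ?pnatr_eq0 // mul1e leeDl. Qed.

Lemma half_mix_dominatesr A : q A <= 2%:E * half_mix A.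
Proof. by rewrite muleA -EFinM mulfV ?pnatr_eq0 // mul1e leeDr. Qed.

End half_mixture.

Section reward.
Local Open Scope ereal_scope.
Context {R : realType} {d d' : measure_display}
  {Pi : measurableType d} {O : measurableType d'}.
Local Notation kern := (@kern R d d' Pi O).

Lemma measurable_unit_reward :
  measurable ([set r : R | (0 <= r <= 1)%R] `*` [set: O]).
Proof.
apply: measurableX => //.
rewrite (_ : [set r : R | _] = `[0%R, 1%R]%classic); first exact: measurable_itv.
by apply/seteqP; split => r; rewrite /= in_itv.
Qed.

Lemma model_reward_ae (M : kern) x : is_model M ->
  {ae M x, forall z : R * O, (0 <= z.1 <= 1)%R}.
Proof.
move=> hM; pose A := [set r : R | (0 <= r <= 1)%R] `*` [set: O].
have mA : measurable A := measurable_unit_reward.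
have MxT : M x [set: R * O] = 1 by exact: prob_kernel.
have nA : M x (~` A) = 0.
  rewrite -setTD measureD //; last by have : M x [set: R * O] < +oo by rewrite MxT ltry.
  change (M x [set: R * O] - M x ([set: R * O] `&` A) = 0).
  by rewrite setTI hM MxT subee.
exists (~` A); split => //; first exact: measurableC.
by move=> [r o] /= Nr01 [/= r01 _]; exact: Nr01.
Qed.

Lemma fM_fin_num (M : kern) x : is_model M -> fM M x \is a fin_num.
Proof.
move=> hM; apply/(integrable_fin_num measurableT)/integrableP; split.
  by apply/measurable_EFinP; exact: measurable_fst.
apply: le_lt_trans (ltry 1%R).
have MxT : M x [set: R * O] = 1 by exact: prob_kernel.
rewrite -[leRHS]mul1e -[X in _ * X]MxT.
apply: integral_le_bound => //.
  by apply/measurable_EFinP; exact: measurable_fst.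
case: (model_reward_ae M x hM) => N [mN MxN sub]; exists N; split => // -[r o] /= h.
apply: sub => /= /andP[r0 r1]; apply: h => _.
by rewrite lee_fin ger0_norm.
Qed.

Lemma gM_integral_ge0 (p : probability Pi R) (M : kern) : is_model M ->
  0 <= \int[p]_x gM M x.
Proof.
move=> hM; apply: integral_ge0 => x _.
rewrite /gM sube_ge0 ?fM_fin_num //.
by apply: ereal_sup_ubound; exists x.
Qed.

End reward.

Section hellinger.
Local Open Scope ereal_scope.
Context {R : realType} {d} {T : measurableType d}.

Lemma D2H_ge0 (P Q : {measure set T -> \bar R}) : 0 <= D2H P Q.
Proof.
apply: (le_trans _ (ereal_sup_ubound _)); last first.
  exists [:: setT]; last reflexivity.
  split=> [A|[|i] [|j]//|]; first by rewrite inE => /eqP ->.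
  by rewrite big_seq1.
by rewrite lee_fin big_seq1 sqr_ge0.
Qed.

End hellinger.

Section dec_comparison.
Local Open Scope ereal_scope.
Context {R : realType} {d d' : measure_display}
  {Pi : measurableType d} {O : measurableType d'}.
Local Notation kern := (@kern R d d' Pi O).
Lemma le_sup0 {H1 H2 : set kern} {F : kern -> \bar R} :
  H1 `<=` H2 -> (forall M, H2 M -> 0 <= F M) -> Defs.sup0 H1 F <= Defs.sup0 H2 F.
Proof.
move=> H12 F0; rewrite /Defs.sup0.
case: pselect => [H10|H10]; case: pselect => [H20|H20] //.
- have /set0P [M H2M] : H2 != set0 by apply/eqP.
  by apply: le_trans (F0 M H2M) _; apply: ereal_sup_ubound; exists M.
- by exfalso; apply: H10; rewrite -subset0 -H20.
- by apply: le_ereal_sup; apply: image_subset.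
Qed.

Variables (Mcls : set kern) (Mbar : kern).

Lemma Hball_dominated (p r : probability Pi R) (c eps : R) : (0 <= c)%R ->
  (forall A, measurable A -> p A <= c%:E * r A) ->
  Hball Mcls Mbar r eps `<=` Hball Mcls Mbar p (Num.sqrt c * eps)%R.
Proof.
move=> c0 pr M [cM hM]; split => //.
have D2H_ge0M x : 0 <= D2H (M x) (Mbar x) by exact: D2H_ge0.
apply: le_trans (le_scale_measure_integral _ _ _ c0 pr _ D2H_ge0M) _.
by rewrite exprMn sqr_sqrtr // EFinM lee_wpmul2l ?lee_fin.
Qed.

End dec_comparison.

Theorem lemmaD3 (R : realType) (d d' : measure_display)
    (Pi : measurableType d) (O : measurableType d')
    (Mcls : set (@kern R d d' Pi O)) (Mbar : @kern R d d' Pi O)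
    (hMcls : forall M, Mcls M -> is_model M) (hMbar : is_model Mbar)
    (eps : R) (heps : 0 < eps) :
  (dec_tilde Mcls Mbar eps <= dec_c Mcls Mbar eps)%E /\
  (dec_c Mcls Mbar eps <= dec_tilde Mcls Mbar (Num.sqrt 2 * eps))%E.
Proof.
have gM_ge0 H (p : probability Pi R) :
    H `<=` Mcls -> forall M, H M -> (0 <= \int[p]_x gM M x)%E.
  by move=> HM M /HM /hMcls; exact: gM_integral_ge0.
split; apply: le_ereal_inf_tmp => _ [p [q ->]].
- apply: le_trans (le_sup0 (@subIsetr _ (Hball Mcls Mbar p eps) _) _).
    by apply: ereal_inf_lbound; exists p, q.
  by apply: gM_ge0 => M [].
- apply: le_trans (le_sup0 (_ : Hball Mcls Mbar (half_mix p q) eps `<=` _) _).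
  + by apply: ereal_inf_lbound; exists p, (half_mix p q).
  + move=> M HM; split.
    * by apply: Hball_dominated HM => // A _; exact: half_mix_dominatesl.
    * by apply: Hball_dominated HM => // A _; exact: half_mix_dominatesr.
  + by apply: gM_ge0 => M [[]].
Qed.
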